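(* Let $F$ be a PB formula, $f\equiv0$, and let $(\mathcal C,\mathcal D,O_{\mathrm{lex}},\vec x,v)$ be a configuration where $\vec x=(x_1,\dots,x_m)$ and $O_{\mathrm{lex}}(\vec u,\vec w)$ is the single constraint $\sum_{i=1}^m 2^{m-i}(w_i-u_i)\ge0$. Let $\sigma$ be a permutation of the set of literals with $\sigma(\bar\ell)=\overline{\sigma(\ell)}$ for all literals $\ell$, such that $\sigma(y)=y$ for every variable $y\notin\{x_1,\dots,x_m\}$ and $\mathcal C|_\sigma=\mathcal C$ (equality of sets of constraints). Let $$C_{LL}:\quad \sum_{i=1}^m 2^{m-i}\bigl(\sigma(x_i)-x_i\bigr)\ge0 .$$ Then, taking $\sigma$ (restricted to variables) as the witness substitution, $$\mathcal C\cup\mathcal D\cup\{f\le v-1\}\cup\{\neg C_{LL}\}\vdash \mathcal C|_\sigma\cup O_{\mathrm{lex}}(\vec x|_\sigma,\vec x)\cup\{f|_\sigma\le f\}$$ and $$\mathcal C\cup\mathcal D\cup\{f\le v-1\}\cup\{\neg C_{LL}\}\cup O_{\mathrm{lex}}(\vec x,\vec x|_\sigma)\vdash 0\ge1 .$$ Consequently, if $(\mathcal C,\mathcal D,O_{\mathrm{lex}},\vec x,v)$ is weakly valid (resp. valid), then so is $(\mathcal C,\mathcal D\cup\{C_{LL}\},O_{\mathrm{lex}},\vec x,v)$.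
   Context: A literal is a variable $x$ or $\bar x=1-x$. A PB constraint is $C:\ \sum_i a_i\ell_i\ge A$ (integers; terms may be collected and constants moved across), with negation $\neg C:\ \sum_i-a_i\ell_i\ge -A+1$. For a substitution $\omega$ (map from variables to literals, identity elsewhere, extended to literals by $\omega(\bar x)=\overline{\omega(x)}$), $C|_\omega$ replaces each literal by its image and $G|_\omega=\{D|_\omega:D\in G\}$; $f|_\omega$ likewise. $O(\vec x|_\alpha,\vec x|_\beta)$ is $O(\vec u,\vec w)$ with $u_i$ replaced by $\alpha(x_i)$ and $w_i$ by $\beta(x_i)$ (identity if no substitution). $G\vdash D$ is cutting planes derivability (axioms, literal axioms $\ell\ge0$, positive integer linear combinations, division with rounding up), extended so that $G\vdash D$ whenever $0\ge1$ is derivable from $G\cup\{\neg D\}$; it is sound. Constraints $f\le\infty-1$ are trivially true. For input $F$ and objective $f$, a configuration $(\mathcal C,\mathcal D,O,\vec z,v)$ ($v\in\mathbb Z\cup\{\infty\}$; $O$ encoding a preorder $\alpha\preceq\beta$ iff $O(\vec z|_\alpha,\vec z|_\beta)$ true; $\alpha\preceq_f\beta$ iff $\alpha\preceq\beta$ and $f(\alpha)\le f(\beta)$) is weakly valid if (1) for every integer $v'<v$, satisfiability of $F\cup\{f\le v'\}$ implies satisfiability of $\mathcal C\cup\{f\le v'\}$; (2) every total $\rho$ satisfying $\mathcal C\cup\{f\le v-1\}$ admits a total $\rho'\preceq_f\rho$ satisfying $\mathcal C\cup\mathcal D\cup\{f\le v-1\}$. It is valid if also (3) $v<\infty$ implies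 $F\cup\{f\le v\}$ satisfiable; (4) for every integer $v'<v$, satisfiability of $\mathcal C\cup\{f\le v'\}$ implies satisfiability of $F\cup\{f\le v'\}$. *)

From Stdlib Require Import ZArith List.
Import ListNotations.
Open Scope Z_scope.

Inductive lit (V : Type) : Type := Pos (x : V) | Neg (x : V).
Arguments Pos {V} x.
Arguments Neg {V} x.

Definition lneg {V} (l : lit V) : lit V :=
  match l with Pos x => Neg x | Neg x => Pos x end.

Record constr (V : Type) : Type := mkC { terms : list (Z * lit V); rhs : Z }.
Arguments mkC {V} terms rhs.
Arguments terms {V} c.
Arguments rhs {V} c.

Definition litval {V} (rho : V -> bool) (l : lit V) : Z :=
  match l with
  | Pos x => if rho x then 1 else 0
  | Neg x => if rho x then 0 else 1
  end.

Definition lin_val {V} (rho : V -> bool) (ts : list (Z * lit V)) : Z :=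
  fold_right (fun t acc => fst t * litval rho (snd t) + acc) 0 ts.

Definition sat_c {V} (rho : V -> bool) (c : constr V) : Prop :=
  lin_val rho (terms c) >= rhs c.

Definition sat {V} (rho : V -> bool) (G : list (constr V)) : Prop :=
  forall c, In c G -> sat_c rho c.

Definition satisfiable {V} (G : list (constr V)) : Prop :=
  exists rho : V -> bool, sat rho G.

Definition negC {V} (c : constr V) : constr V :=
  mkC (map (fun t => (- fst t, snd t)) (terms c)) (- rhs c + 1).

Definition falseC {V} : constr V := mkC [] 1.

(** Two constraints are the same up to collecting terms and moving constants
    across iff they have the same affine form (LHS - RHS) as a function of the
    variables; affine functions are determined by their values on 0/1 points. *)
Definition equivC {V} (c1 c2 : constr V) : Prop :=
  forall rho : V -> bool,
    lin_val rho (terms c1) - rhs c1 = lin_val rho (terms c2) - rhs c2.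

Definition addC {V} (c1 c2 : constr V) : constr V :=
  mkC (terms c1 ++ terms c2) (rhs c1 + rhs c2).

Definition scaleC {V} (k : Z) (c : constr V) : constr V :=
  mkC (map (fun t => (k * fst t, snd t)) (terms c)) (k * rhs c).

(** ceiling of a / d for d > 0 *)
Definition ceil_div (a d : Z) : Z := - ((- a) / d).

Definition divC {V} (d : Z) (c : constr V) : constr V :=
  mkC (map (fun t => (ceil_div (fst t) d, snd t)) (terms c)) (ceil_div (rhs c) d).

Definition lit_var {V} (l : lit V) : V := match l with Pos x => x | Neg x => x end.

Definition normalized {V} (c : constr V) : Prop :=
  NoDup (map (fun t => lit_var (snd t)) (terms c)) /\
  Forall (fun t => 0 <= fst t) (terms c).

Inductive cp {V} (G : list (constr V)) : constr V -> Prop :=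
| cp_ax c : In c G -> cp G c
| cp_lit (l : lit V) : cp G (mkC [(1, l)] 0)
| cp_add c1 c2 : cp G c1 -> cp G c2 -> cp G (addC c1 c2)
| cp_scale k c : 0 < k -> cp G c -> cp G (scaleC k c)
| cp_div d c : 0 < d -> normalized c -> cp G c -> cp G (divC d c)
| cp_equiv c c' : equivC c c' -> cp G c -> cp G c'.

Definition derives {V} (G : list (constr V)) (D : constr V) : Prop :=
  cp G D \/ cp (negC D :: G) falseC.

Definition derives_all {V} (G H : list (constr V)) : Prop :=
  forall D, In D H -> derives G D.

Definition substL {V W} (w : V -> lit W) (l : lit V) : lit W :=
  match l with Pos x => w x | Neg x => lneg (w x) end.

Definition substT {V W} (w : V -> lit W) (ts : list (Z * lit V)) : list (Z * lit W) :=
  map (fun t => (fst t, substL w (snd t))) ts.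

Definition substC {V W} (w : V -> lit W) (c : constr V) : constr W :=
  mkC (substT w (terms c)) (rhs c).

Definition set_eqC {V} (G H : list (constr V)) : Prop :=
  (forall c, In c G -> exists c', In c' H /\ equivC c c') /\
  (forall c, In c H -> exists c', In c' G /\ equivC c c').

Definition objective := list (Z * lit nat).

Definition obj_val (rho : nat -> bool) (f : objective) : Z := lin_val rho f.

Definition leC (f : objective) (k : Z) : constr nat :=
  mkC (map (fun t => (- fst t, snd t)) f) (- k).

(** v in Z u {oo}: None = oo.  The constraint f <= v - 1 (trivially true, hence
    omitted, when v = oo). *)
Definition ub (f : objective) (v : option Z) : list (constr nat) :=
  match v with Some k => [leC f (k - 1)] | None => [] end.

Definition lt_v (v' : Z) (v : option Z) : Prop :=
  match v with Some k => v' < k | None => True end.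

Definition obj_le_subst (w : nat -> lit nat) (f : objective) : constr nat :=
  mkC (f ++ map (fun t => (- fst t, substL w (snd t))) f) 0.

(** Order encodings O(u, w): constraints over the variables u_i = (false, i),
    w_i = (true, i) (0-indexed i). *)
Definition ord_enc := list (constr (bool * nat)).

Definition O_inst (a b : nat -> lit nat) (z : list nat) (O : ord_enc) : list (constr nat) :=
  map (substC (fun p : bool * nat =>
                 if fst p then b (nth (snd p) z 0%nat) else a (nth (snd p) z 0%nat))) O.

Definition preceq (O : ord_enc) (z : list nat) (alpha beta : nat -> bool) : Prop :=
  sat (fun p : bool * nat =>
         if fst p then beta (nth (snd p) z 0%nat) else alpha (nth (snd p) z 0%nat)) O.

Definition preceq_f (O : ord_enc) (z : list nat) (f : objective)
  (alpha beta : nat -> bool) : Prop :=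
  preceq O z alpha beta /\ obj_val alpha f <= obj_val beta f.

Definition weakly_valid (F : list (constr nat)) (f : objective)
  (C D : list (constr nat)) (O : ord_enc) (z : list nat) (v : option Z) : Prop :=
  (forall v' : Z, lt_v v' v ->
     satisfiable (F ++ [leC f v']) -> satisfiable (C ++ [leC f v'])) /\
  (forall rho : nat -> bool, sat rho (C ++ ub f v) ->
     exists rho' : nat -> bool,
       preceq_f O z f rho' rho /\ sat rho' (C ++ D ++ ub f v)).

Definition valid (F : list (constr nat)) (f : objective)
  (C D : list (constr nat)) (O : ord_enc) (z : list nat) (v : option Z) : Prop :=
  weakly_valid F f C D O z v /\
  (forall k : Z, v = Some k -> satisfiable (F ++ [leC f k])) /\
  (forall v' : Z, lt_v v' v ->
     satisfiable (C ++ [leC f v']) -> satisfiable (F ++ [leC f v'])).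

(** O_lex(u, w) :  sum_{i=1}^m 2^(m-i) (w_i - u_i) >= 0  (0-indexed: j = i-1) *)
Definition lex_coef (m j : nat) : Z := 2 ^ Z.of_nat (m - 1 - j).

Definition O_lex (m : nat) : ord_enc :=
  [mkC (flat_map (fun j => [(lex_coef m j, Pos (true, j));
                            (- lex_coef m j, Pos (false, j))]) (seq 0 m)) 0].

Definition C_LL (sigma : lit nat -> lit nat) (x : list nat) : constr nat :=
  let m := length x in
  mkC (flat_map (fun j => [(lex_coef m j, sigma (Pos (nth j x 0%nat)));
                           (- lex_coef m j, Pos (nth j x 0%nat))]) (seq 0 m)) 0.

Definition lit_perm (sigma : lit nat -> lit nat) : Prop :=
  exists tau : lit nat -> lit nat,
    (forall l, tau (sigma l) = l) /\ (forall l, sigma (tau l) = l).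

Definition restrict_vars (sigma : lit nat -> lit nat) : nat -> lit nat :=
  fun y => sigma (Pos y).

(* If some assignment satisfies C, D and f <= v - 1 but violates C_LL, then its image
   under sigma is lexicographically strictly smaller and still satisfies C (as
   C|_sigma = C) and the trivial bound on f = 0; weak validity then yields a model of
   C, D and the bound that is lexicographically no larger.  The lexicographic value is
   a natural number, so this descent ends in a model that also satisfies C_LL.  The
   two derivations are linear: O(x|_sigma, x) is neg C_LL weakened by 1, and
   O(x, x|_sigma) is C_LL itself. *)

From Stdlib Require Import ZArith Zwf List Lia Wellfounded.
Import ListNotations.
Open Scope Z_scope.

Definition assign_subst {V W} (rho : W -> bool) (w : V -> lit W) : V -> bool :=
  fun y => match w y with Pos z => rho z | Neg z => negb (rho z) end.

Lemma litval_substL {V W} (rho : W -> bool) (w : V -> lit W) (l : lit V) :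
  litval rho (substL w l) = litval (assign_subst rho w) l.
Proof.
  unfold assign_subst; destruct l as [y|y]; simpl;
    destruct (w y) as [z|z]; simpl; destruct (rho z); reflexivity.
Qed.

Lemma lin_val_app {V} (rho : V -> bool) (ts ts' : list (Z * lit V)) :
  lin_val rho (ts ++ ts') = lin_val rho ts + lin_val rho ts'.
Proof. induction ts as [|t ts IH]; simpl; lia. Qed.

Lemma lin_val_substT {V W} (rho : W -> bool) (w : V -> lit W) ts :
  lin_val rho (substT w ts) = lin_val (assign_subst rho w) ts.
Proof.
  unfold substT; induction ts as [|t ts IH]; simpl; [reflexivity|].
  rewrite IH, litval_substL; reflexivity.
Qed.

Lemma lin_val_opp {V} (rho : V -> bool) ts :
  lin_val rho (map (fun t => (- fst t, snd t)) ts) = - lin_val rho ts.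
Proof. induction ts as [|t ts IH]; simpl; lia. Qed.

Definition slack {V} (rho : V -> bool) (c : constr V) : Z :=
  lin_val rho (terms c) - rhs c.

Lemma sat_c_slack {V} (rho : V -> bool) c : sat_c rho c <-> 0 <= slack rho c.
Proof. unfold sat_c, slack; lia. Qed.

Lemma equivC_slack {V} (c c' : constr V) :
  (forall rho, slack rho c = slack rho c') -> equivC c c'.
Proof. exact (fun H => H). Qed.

Lemma slack_addC {V} (rho : V -> bool) c c' :
  slack rho (addC c c') = slack rho c + slack rho c'.
Proof. unfold slack, addC; simpl; rewrite lin_val_app; lia. Qed.

Lemma slack_negC {V} (rho : V -> bool) c : slack rho (negC c) = - slack rho c - 1.
Proof. unfold slack, negC; simpl; rewrite lin_val_opp; lia. Qed.

Lemma slack_substC {V W} (rho : W -> bool) (w : V -> lit W) c :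
  slack rho (substC w c) = slack (assign_subst rho w) c.
Proof. unfold slack, substC; simpl; rewrite lin_val_substT; reflexivity. Qed.

Lemma slack_leC rho f k : slack rho (leC f k) = k - obj_val rho f.
Proof. unfold slack, leC, obj_val; simpl; rewrite lin_val_opp; lia. Qed.

Lemma slack_obj_le_subst rho w f :
  slack rho (obj_le_subst w f) = obj_val rho f - obj_val (assign_subst rho w) f.
Proof.
  unfold slack, obj_le_subst, obj_val; simpl.
  replace (map _ f) with (map (fun t => (- fst t, snd t)) (substT w f))
    by (unfold substT; rewrite map_map; reflexivity).
  rewrite lin_val_app, lin_val_opp, lin_val_substT; lia.
Qed.

Lemma sat_app {V} (rho : V -> bool) G H : sat rho (G ++ H) <-> sat rho G /\ sat rho H.
Proof.
  unfold sat; split.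
  - intro HGH; split; intros c Hc; apply HGH, in_app_iff; auto.
  - intros [HG HH] c Hc; apply in_app_iff in Hc as [Hc|Hc]; auto.
Qed.

Lemma sat_singleton {V} (rho : V -> bool) c : sat rho [c] <-> sat_c rho c.
Proof.
  unfold sat; split; [intro H; apply H; left; reflexivity|].
  intros Hc c' [<-|[]]; exact Hc.
Qed.

Lemma sat_assign_subst {V} (rho : V -> bool) (w : V -> lit V) C :
  set_eqC (map (substC w) C) C -> sat rho C -> sat (assign_subst rho w) C.
Proof.
  intros [HCw _] HC c Hc.
  destruct (HCw (substC w c)) as [c' [Hc' Hequiv]]; [apply in_map; exact Hc|].
  specialize (Hequiv rho); specialize (HC c' Hc').
  rewrite sat_c_slack in *; rewrite <- slack_substC; unfold slack in *; lia.
Qed.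

Lemma sat_ub_zero_objective f v (rho rho' : nat -> bool) :
  (forall rho, obj_val rho f = 0) -> sat rho (ub f v) -> sat rho' (ub f v).
Proof.
  intros f_zero; destruct v as [k|]; simpl; [|intros _ c []].
  rewrite !sat_singleton, !sat_c_slack, !slack_leC, !f_zero; exact id.
Qed.

Definition wsum (c h : nat -> Z) (l : list nat) : Z :=
  fold_right (fun j acc => c j * h j + acc) 0 l.

Lemma wsum_ext c h h' l : (forall j, h j = h' j) -> wsum c h l = wsum c h' l.
Proof. intro Hh; induction l as [|j l IH]; simpl; [|rewrite Hh, IH]; reflexivity. Qed.

Lemma wsum_nonneg c h l :
  (forall j, 0 <= c j) -> (forall j, 0 <= h j) -> 0 <= wsum c h l.
Proof.
  intros Hc Hh; induction l as [|j l IH]; simpl; [lia|].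
  specialize (Hc j); specialize (Hh j); nia.
Qed.

Lemma lin_val_pairs {V} (rho : V -> bool) (c : nat -> Z) (A B : nat -> lit V) l :
  lin_val rho (flat_map (fun j => [(c j, A j); (- c j, B j)]) l) =
  wsum c (fun j => litval rho (A j)) l - wsum c (fun j => litval rho (B j)) l.
Proof.
  induction l as [|j l IH]; [reflexivity|].
  cbn [flat_map app]; unfold lin_val in *; cbn [fold_right fst snd]; rewrite IH.
  unfold wsum; cbn [fold_right]; lia.
Qed.

Definition lex_value (x : list nat) (a : nat -> lit nat) (rho : nat -> bool) : Z :=
  wsum (lex_coef (length x)) (fun j => litval rho (a (nth j x 0%nat)))
    (seq 0 (length x)).

Lemma lex_value_nonneg x a rho : 0 <= lex_value x a rho.
Proof.
  apply wsum_nonneg; intro j.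
  - apply Z.pow_nonneg; lia.
  - destruct (a (nth j x 0%nat)) as [y|y]; simpl; destruct (rho y); lia.
Qed.

Lemma lex_value_subst x a rho : lex_value x a rho = lex_value x Pos (assign_subst rho a).
Proof. apply wsum_ext; intro j; exact (litval_substL rho a (Pos _)). Qed.

Lemma preceq_O_lex x alpha beta :
  preceq (O_lex (length x)) x alpha beta <-> lex_value x Pos alpha <= lex_value x Pos beta.
Proof.
  unfold preceq, O_lex; rewrite sat_singleton, sat_c_slack.
  unfold slack; simpl; rewrite lin_val_pairs; unfold lex_value; simpl; lia.
Qed.

Lemma O_inst_O_lex a b x :
  exists c, O_inst a b x (O_lex (length x)) = [c] /\
    forall rho, slack rho c = lex_value x b rho - lex_value x a rho.
Proof.
  eexists; split; [reflexivity|]; intro rho.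
  rewrite slack_substC; unfold slack; cbn [terms rhs]; rewrite lin_val_pairs, Z.sub_0_r.
  unfold lex_value; f_equal; apply wsum_ext; intro j;
    rewrite <- (litval_substL rho _ (Pos _)); reflexivity.
Qed.

Lemma slack_C_LL sigma x rho :
  slack rho (C_LL sigma x) = lex_value x (restrict_vars sigma) rho - lex_value x Pos rho.
Proof. unfold slack, C_LL; cbn [terms rhs]; rewrite lin_val_pairs; apply Z.sub_0_r. Qed.

Lemma cp_zero_ge_neg1 {V} (G : list (constr V)) (y : V) : cp G (mkC [] (-1)).
Proof.
  apply cp_equiv with (addC (mkC [(1, Pos y)] 0) (mkC [(1, Neg y)] 0)).
  - intro rho; simpl; destruct (rho y); reflexivity.
  - apply cp_add; apply cp_lit.
Qed.

Lemma derives_zero_slack {V} (G : list (constr V)) D :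
  (forall rho, slack rho D = 0) -> derives G D.
Proof.
  intro HD; right; apply cp_equiv with (negC D); [|apply cp_ax; left; reflexivity].
  apply equivC_slack; intro rho; rewrite slack_negC, HD; reflexivity.
Qed.

Lemma derives_all_app {V} (G H H' : list (constr V)) :
  derives_all G H -> derives_all G H' -> derives_all G (H ++ H').
Proof. intros HH HH' c Hc; apply in_app_iff in Hc as [Hc|Hc]; auto. Qed.

Lemma derives_all_substC_invariant {V} (G C : list (constr V)) (w : V -> lit V) :
  incl C G -> set_eqC (map (substC w) C) C -> derives_all G (map (substC w) C).
Proof.
  intros HCG [HCw _] c Hc; left.
  destruct (HCw c Hc) as [c' [Hc' Hequiv]].
  apply cp_equiv with c'; [intro rho; symmetry; apply Hequiv|].
  apply cp_ax, HCG, Hc'.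
Qed.

Section LexLeaderDerivations.

Variables (G : list (constr nat)) (sigma : lit nat -> lit nat) (x : list nat).
Hypothesis neg_C_LL_in : In (negC (C_LL sigma x)) G.

Lemma derives_all_O_lex_subst_le :
  derives_all G (O_inst (restrict_vars sigma) Pos x (O_lex (length x))).
Proof.
  destruct (O_inst_O_lex (restrict_vars sigma) Pos x) as [c [-> Hc]].
  intros c' [<-|[]]; left.
  apply cp_equiv with (addC (negC (C_LL sigma x)) (mkC [] (-1))).
  - apply equivC_slack; intro rho.
    rewrite slack_addC, slack_negC, slack_C_LL, Hc; unfold slack; simpl; lia.
  - apply cp_add; [apply cp_ax, neg_C_LL_in|apply (cp_zero_ge_neg1 _ 0%nat)].
Qed.

Lemma cp_false_O_lex_le_subst :
  incl (O_inst Pos (restrict_vars sigma) x (O_lex (length x))) G -> cp G falseC.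
Proof.
  destruct (O_inst_O_lex Pos (restrict_vars sigma) x) as [c [-> Hc]]; intro Hc_in.
  apply cp_equiv with (addC (negC (C_LL sigma x)) c).
  - apply equivC_slack; intro rho.
    rewrite slack_addC, slack_negC, slack_C_LL, Hc; unfold slack; simpl; lia.
  - apply cp_add; apply cp_ax; [exact neg_C_LL_in|apply Hc_in; left; reflexivity].
Qed.

End LexLeaderDerivations.

Section LexLeaderDescent.

Variables (f : objective) (C D : list (constr nat)) (x : list nat) (v : option Z)
  (sigma : lit nat -> lit nat).
Hypothesis f_zero : forall rho, obj_val rho f = 0.
Hypothesis C_sigma : set_eqC (map (substC (restrict_vars sigma)) C) C.
Hypothesis D_witness : forall rho, sat rho (C ++ ub f v) ->
  exists rho', preceq_f (O_lex (length x)) x f rho' rho /\ sat rho' (C ++ D ++ ub f v).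

Lemma lex_descent_C_LL rho : sat rho (C ++ D ++ ub f v) ->
  exists rho', lex_value x Pos rho' <= lex_value x Pos rho /\
    sat rho' (C ++ (D ++ [C_LL sigma x]) ++ ub f v).
Proof.
  induction rho as [rho IH] using (well_founded_induction
    (wf_inverse_image _ _ _ (lex_value x Pos) (Zwf_well_founded 0))).
  intro Hrho; rewrite !sat_app in Hrho; destruct Hrho as [HC [HD Hub]].
  destruct (Z_le_gt_dec 0 (slack rho (C_LL sigma x))) as [HLL|HLL].
  - exists rho; split; [lia|].
    rewrite !sat_app, sat_singleton, sat_c_slack; tauto.
  - destruct (D_witness (assign_subst rho (restrict_vars sigma)))
      as [rho' [[Hprec _] Hrho']].
    { apply sat_app; split; [apply sat_assign_subst; assumption|].
      apply (sat_ub_zero_objective f v rho); assumption. }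
    apply preceq_O_lex in Hprec.
    rewrite slack_C_LL, lex_value_subst in HLL.
    destruct (IH rho') as [rho'' [Hle Hsat]]; [|exact Hrho'|].
    + split; [apply lex_value_nonneg|lia].
    + exists rho''; split; [lia|exact Hsat].
Qed.

Lemma witness_C_LL rho : sat rho (C ++ ub f v) ->
  exists rho', preceq_f (O_lex (length x)) x f rho' rho /\
    sat rho' (C ++ (D ++ [C_LL sigma x]) ++ ub f v).
Proof.
  intro Hrho; destruct (D_witness rho Hrho) as [rho1 [[Hprec _] Hrho1]].
  destruct (lex_descent_C_LL rho1 Hrho1) as [rho2 [Hle Hrho2]].
  exists rho2; split; [split|exact Hrho2].
  - apply preceq_O_lex in Hprec; apply preceq_O_lex; lia.
  - rewrite !f_zero; lia.
Qed.

End LexLeaderDescent.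

Lemma weakly_valid_C_LL F f C D x v sigma :
  (forall rho, obj_val rho f = 0) ->
  set_eqC (map (substC (restrict_vars sigma)) C) C ->
  weakly_valid F f C D (O_lex (length x)) x v ->
  weakly_valid F f C (D ++ [C_LL sigma x]) (O_lex (length x)) x v.
Proof.
  intros f_zero C_sigma [W1 W2]; split; [exact W1|].
  exact (witness_C_LL f C D x v sigma f_zero C_sigma W2).
Qed.

Theorem mainTheorem9 (F : list (constr nat)) (f : objective)
  (C D : list (constr nat)) (x : list nat) (v : option Z)
  (sigma : lit nat -> lit nat) :
  (forall rho : nat -> bool, obj_val rho f = 0) ->
  lit_perm sigma ->
  (forall l : lit nat, sigma (lneg l) = lneg (sigma l)) ->
  (forall y : nat, ~ In y x -> sigma (Pos y) = Pos y) ->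
  set_eqC (map (substC (restrict_vars sigma)) C) C ->
  let w := restrict_vars sigma in
  let G := C ++ D ++ ub f v ++ [negC (C_LL sigma x)] in
  derives_all G
    (map (substC w) C ++ O_inst w Pos x (O_lex (length x)) ++ [obj_le_subst w f])
  /\ derives (G ++ O_inst Pos w x (O_lex (length x))) falseC
  /\ (weakly_valid F f C D (O_lex (length x)) x v ->
      weakly_valid F f C (D ++ [C_LL sigma x]) (O_lex (length x)) x v)
  /\ (valid F f C D (O_lex (length x)) x v ->
      valid F f C (D ++ [C_LL sigma x]) (O_lex (length x)) x v).
Proof.
  (* The argument only needs C|_sigma = C. *)
  intros f_zero _ _ _ C_sigma w G.
  assert (neg_C_LL_in : In (negC (C_LL sigma x)) G)
    by (unfold G; rewrite !in_app_iff; simpl; tauto).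
  split; [|split; [|split]].
  - apply derives_all_app; [|apply derives_all_app].
    + apply derives_all_substC_invariant; [apply incl_appl, incl_refl|exact C_sigma].
    + apply derives_all_O_lex_subst_le, neg_C_LL_in.
    + intros c [<-|[]]; apply derives_zero_slack; intro rho.
      rewrite slack_obj_le_subst, !f_zero; reflexivity.
  - left; apply (cp_false_O_lex_le_subst _ sigma x).
    + apply in_app_iff; left; exact neg_C_LL_in.
    + apply incl_appr, incl_refl.
  - apply weakly_valid_C_LL; assumption.
  - intros [WV [V3 V4]]; split; [apply weakly_valid_C_LL|split]; assumption.
Qed.
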